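(* Let $r\ge 3$, $\varepsilon>0$, and let $G$ be an $n$-vertex maximal $K_r$-free graph with minimum degree $\delta(G)\ge\left(\frac{2r-5}{2r-3}+\varepsilon\right)n$. Then $G$ is $\varepsilon^{r-2}$-ultra maximal $K_r$-free.
   Context: An $n$-vertex graph $G$ is $\alpha$-ultra maximal $K_r$-free if it is $K_r$-free and for every pair of non-adjacent vertices $u,v$, the induced subgraph $G[N(u)\cap N(v)]$ contains at least $\alpha n^{r-2}$ copies of $K_{r-2}$. A graph is maximal $K_r$-free if it is $K_r$-free and adding any new edge creates a $K_r$. *)

From HB Require Import structures.
From mathcomp Require Import all_boot all_order all_algebra.
Set Implicit Arguments. Unset Strict Implicit. Unset Printing Implicit Defensive.
Import Order.TTheory GRing.Theory Num.Theory.

Definition simple_graph (T : finType) (e : rel T) : Prop :=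
  symmetric e /\ irreflexive e.

Definition clique (T : finType) (e : rel T) (S : {set T}) : Prop :=
  forall x y, x \in S -> y \in S -> x != y -> e x y.

Definition Kr_free (T : finType) (e : rel T) (r : nat) : Prop :=
  forall S : {set T}, #|S| = r -> ~ clique e S.

Definition add_edge (T : finType) (e : rel T) (u v : T) : rel T :=
  fun x y => [|| e x y, (x == u) && (y == v) | (x == v) && (y == u)].

Definition maximal_Kr_free (T : finType) (e : rel T) (r : nat) : Prop :=
  Kr_free e r /\
  forall u v : T, u != v -> ~~ e u v -> ~ Kr_free (add_edge e u v) r.

Definition nbhd (T : finType) (e : rel T) (v : T) : {set T} := [set x | e v x].

Definition num_cliques (T : finType) (e : rel T) (A : {set T}) (k : nat) : nat :=
  #|[set S : {set T} | (S \subset A) && (#|S| == k) &&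
      [forall x in S, forall y in S, (x != y) ==> e x y]]|.

Local Open Scope ring_scope.

Definition ultra_maximal_Kr_free (R : realFieldType) (T : finType) (e : rel T)
    (r : nat) (alpha : R) : Prop :=
  Kr_free e r /\
  forall u v : T, u != v -> ~~ e u v ->
    alpha * (#|T|%:R ^+ (r - 2)%N) <= (num_cliques e (nbhd e u :&: nbhd e v) (r - 2)%N)%:R.

From HB Require Import structures.
From mathcomp Require Import all_boot all_order all_algebra.
From mathcomp Require Import zify ring lra.
Import Order.TTheory GRing.Theory Num.Theory.
Set Implicit Arguments. Unset Strict Implicit. Unset Printing Implicit Defensive.

(* For non-adjacent u, v, maximality yields a K_(r-2) inside N(u) ∩ N(v).
   Counting step: let A be K_(k+3)-free, let every vertex of A miss at most D
   vertices of A, and let S be a K_(k+1) in C = N(u) ∩ N(v) ∩ A.  Summing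
   e(u,y) + e(v,y) + |S ∩ N(y)| over y ∈ A gives at least (k+3)(|A| - D),
   while each y contributes at most k+1, plus 1 only if y is an apex of C,
   i.e. C ∩ N(y) contains a K_k.  Hence C has at least 2|A| - (k+3)D apexes.
   Recursing into A ∩ N(x) for each apex x and double counting K_(k+1)'s of C
   gives #K_k(C) >= t^k by induction on k, as long as (2k+1)(D+t) <= 2|A|.
   With k = r - 2, t = εn and D = n - ((2r-5)/(2r-3) + ε)n >= n - δ(G), the
   condition holds with equality: (2r-3)(D + t) = 2n. *)

Lemma sum_nat_of_bool (I : finType) (A : {pred I}) (P : pred I) :
  (\sum_(i in A) (P i : nat) = #|[set i in A | P i]|)%N.
Proof. by rewrite -big_mkcondr sum1dep_card. Qed.

Lemma leq_sum_subset (I : finType) (A B : {set I}) (F : I -> nat) :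
  A \subset B -> (\sum_(i in A) F i <= \sum_(i in B) F i)%N.
Proof. by move=> /subsetP AB; apply: (sub_le_big leqnn (fun x y => leq_addr y x)). Qed.

Definition cliqueb (T : finType) (e : rel T) (S : {set T}) :=
  [forall x in S, forall y in S, (x != y) ==> e x y].

Lemma cliquebP (T : finType) (e : rel T) (S : {set T}) :
  reflect (clique e S) (cliqueb e S).
Proof.
apply: (iffP idP) => [/forall_inP cS x y xS yS | cS].
  by have /forall_inP/(_ y yS)/implyP := cS x xS.
by apply/forall_inP => x xS; apply/forall_inP => y yS; apply/implyP; apply: cS.
Qed.

Lemma clique_add_edge_setD1 (T : finType) (e : rel T) (u v : T) (S : {set T}) :
  clique (add_edge e u v) S -> clique e (S :\ u) /\ clique e (S :\ v).
Proof.
move=> cS; split=> x y /setD1P[xw xS] /setD1P[yw yS] /(cS x y xS yS);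
  by rewrite /add_edge (negbTE xw) (negbTE yw) !andbF !orbF.
Qed.

Section Cliques.

Variables (T : finType) (e : rel T).
Hypotheses (esym : symmetric e) (eirr : irreflexive e).
Local Notation N := (nbhd e).

Definition cliques (A : {set T}) (k : nat) :=
  [set S : {set T} | (S \subset A) && (#|S| == k) && cliqueb e S].

Definition Kr_free_on (A : {set T}) (r : nat) :=
  forall S : {set T}, S \subset A -> #|S| = r -> ~ clique e S.

Lemma num_cliquesE (A : {set T}) k : num_cliques e A k = #|cliques A k|.
Proof. by []. Qed.

Lemma cliquesP (A : {set T}) (k : nat) (S : {set T}) :
  reflect [/\ S \subset A, #|S| = k & clique e S] (S \in cliques A k).
Proof.
rewrite inE; apply: (iffP idP) => [/andP[/andP[SA /eqP ->] /cliquebP] | [-> -> /cliquebP ->]] //.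
by rewrite eqxx.
Qed.

Lemma in_nbhd x y : (y \in N x) = e x y.
Proof. by rewrite inE. Qed.

Lemma notin_nbhd_subset x (S : {set T}) : S \subset N x -> x \notin S.
Proof. by move=> /subsetP SN; apply/negP => /SN; rewrite in_nbhd eirr. Qed.

Lemma clique_subset (S S' : {set T}) : S' \subset S -> clique e S -> clique e S'.
Proof. by move=> /subsetP S'S cS x y /S'S xS /S'S yS; apply: cS. Qed.

Lemma clique_setU1 x (S : {set T}) : clique e S -> S \subset N x -> clique e (x |: S).
Proof.
move=> cS /subsetP SN a b /setU1P[->|aS] /setU1P[->|bS] nab.
- by rewrite eqxx in nab.
- by rewrite -in_nbhd SN.
- by rewrite esym -in_nbhd SN.
- exact: cS.
Qed.

Lemma Kr_free_on_setI_nbhd (A : {set T}) r x :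
  Kr_free_on A r.+1 -> x \in A -> Kr_free_on (A :&: N x) r.
Proof.
move=> free xA S; rewrite subsetI => /andP[SA SN] cardS cS.
apply: (free (x |: S)); last exact: clique_setU1.
- by rewrite subUset sub1set xA.
- by rewrite cardsU1 (notin_nbhd_subset SN) cardS.
Qed.

Lemma card_setI_nbhd (A : {set T}) s : #|A :&: N s| = (\sum_(y in A) e s y)%N.
Proof. by rewrite sum_nat_of_bool; apply: eq_card => y; rewrite !inE. Qed.

Lemma sum_card_setI_nbhd (A B : {set T}) :
  (\sum_(y in A) #|B :&: N y| = \sum_(s in B) #|A :&: N s|)%N.
Proof.
under eq_bigr do rewrite card_setI_nbhd.
rewrite exchange_big; apply: eq_bigr => s _.
by rewrite card_setI_nbhd; apply: eq_bigr => y _; rewrite esym.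
Qed.

Lemma sum_cliques_setI_nbhd (C : {set T}) k :
  (\sum_(x in C) #|cliques (C :&: N x) k| <= k.+1 * #|cliques C k.+1|)%N.
Proof.
have extend x : x \in C ->
    (#|cliques (C :&: N x) k| <= #|[set S in cliques C k.+1 | x \in S]|)%N.
  move=> xC.
  have inj : {in cliques (C :&: N x) k &, injective (fun S => x |: S)}.
    have xN S : S \in cliques (C :&: N x) k -> x \notin S.
      by case/cliquesP=> SN _ _; apply/notin_nbhd_subset/(subset_trans SN)/subsetIr.
    move=> S1 S2 S1K S2K eqS.
    by rewrite -(setU1K (xN _ S1K)) -(setU1K (xN _ S2K)) eqS.
  rewrite -(card_in_imset inj); apply/subset_leq_card/subsetP.
  move=> _ /imsetP[S /cliquesP[+ cardS cS] ->]; rewrite subsetI => /andP[SC SN].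
  rewrite inE setU11 andbT; apply/cliquesP; split.
  - by rewrite subUset sub1set xC.
  - by rewrite cardsU1 (notin_nbhd_subset SN) cardS.
  - exact: clique_setU1.
apply: leq_trans (leq_sum _ extend) _.
under eq_bigr do rewrite -sum_nat_of_bool.
rewrite exchange_big /= mulnC -sum_nat_const; apply: leq_sum => S /cliquesP[_ <- _].
by rewrite sum_nat_of_bool subset_leq_card //; apply/subsetP => x /[!inE] /andP[].
Qed.

Definition clique_apexes (C : {set T}) (k : nat) :=
  [set x in C | cliques (C :&: N x) k != set0].

Lemma adjacency_count_le (A S0 : {set T}) k u v y :
  Kr_free_on A k.+3 -> u \in A -> v \in A -> y \in A ->
  S0 \in cliques (N u :&: N v :&: A) k.+1 ->
  (e u y + e v y + #|S0 :&: N y|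
     <= k.+1 + (y \in clique_apexes (N u :&: N v :&: A) k))%N.
Proof.
move=> free uA vA yA /cliquesP[]; rewrite !subsetI => /andP[/andP[S0u S0v] S0A] cardS0 cS0.
have not_sub w : w \in A -> S0 \subset N w -> e w y -> ~~ (S0 \subset N y).
  move=> wA S0w ewy; apply/negP => S0y.
  have wAy : w \in A :&: N y by rewrite inE wA in_nbhd esym.
  apply: (Kr_free_on_setI_nbhd (Kr_free_on_setI_nbhd free yA) wAy) cardS0 cS0.
  by rewrite !subsetI S0A S0y S0w.
have le_k w : w \in A -> S0 \subset N w -> e w y -> (#|S0 :&: N y| <= k)%N.
  move=> wA S0w ewy; rewrite -ltnS -cardS0.
  exact/proper_card/properIl/(not_sub w).
have le_k1 : (#|S0 :&: N y| <= k.+1)%N by rewrite -cardS0 subset_leq_card ?subsetIl.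
have apex : e u y -> e v y -> #|S0 :&: N y| = k ->
    y \in clique_apexes (N u :&: N v :&: A) k.
  move=> euy evy cardS0y; rewrite !inE euy evy yA /=; apply/set0Pn.
  exists (S0 :&: N y); apply/cliquesP; split=> //.
  - by rewrite setSI // !subsetI S0u S0v.
  - exact: clique_subset (subsetIl _ _) cS0.
move: (le_k u uA S0u) (le_k v vA S0v) apex.
by case: (e u y); case: (e v y); case: (y \in _) => /=; lia.
Qed.

Section CliqueCount.

Local Open Scope ring_scope.
Variables (R : realFieldType) (D : R).

Definition nondegree_le (A : {set T}) :=
  forall y, y \in A -> #|A :\: N y|%:R <= D.

Lemma nondegree_le_setI_nbhd A x : nondegree_le A -> nondegree_le (A :&: N x).
Proof.
move=> nd y /setIP[yA _]; apply: le_trans (nd y yA).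
by rewrite ler_nat subset_leq_card // setSD // subsetIl.
Qed.

Lemma card_setI_nbhd_ge A w :
  nondegree_le A -> w \in A -> #|A|%:R - D <= #|A :&: N w|%:R.
Proof.
move=> nd wA; have := nd w wA.
by rewrite -(cardsID (N w) A) natrD; lra.
Qed.

Lemma card_clique_apexes_ge (A S0 : {set T}) k u v :
  Kr_free_on A k.+3 -> nondegree_le A -> u \in A -> v \in A ->
  S0 \in cliques (N u :&: N v :&: A) k.+1 ->
  2 * #|A|%:R - (k%:R + 3) * D <= #|clique_apexes (N u :&: N v :&: A) k|%:R.
Proof.
move=> free nd uA vA S0K.
have count : (#|A :&: N u| + #|A :&: N v| + \sum_(s in S0) #|A :&: N s|
              <= k.+1 * #|A| + #|clique_apexes (N u :&: N v :&: A) k|)%N.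
  rewrite -sum_card_setI_nbhd (card_setI_nbhd A u) (card_setI_nbhd A v) -!big_split /=.
  apply: leq_trans (leq_sum _ (fun y yA => adjacency_count_le free uA vA yA S0K)) _.
  rewrite big_split sum_nat_const /= mulnC leq_add2l sum_nat_of_bool.
  by apply/subset_leq_card/subsetP => y; rewrite inE => /andP[].
have [S0sub cardS0 _] := cliquesP _ _ _ S0K.
have S0A : S0 \subset A := subset_trans S0sub (subsetIr _ _).
have sum_ge : k.+1%:R * (#|A|%:R - D) <= \sum_(s in S0) #|A :&: N s|%:R.
  rewrite -cardS0 mulr_natl -sumr_const; apply: ler_sum => s sS0.
  exact/card_setI_nbhd_ge/(subsetP S0A).
have E1 : k.+1%:R = k%:R + 1 :> R by rewrite -natr1.
move: count sum_ge; rewrite -(ler_nat R) !natrD natrM natr_sum E1.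
have := card_setI_nbhd_ge nd uA; have := card_setI_nbhd_ge nd vA; nra.
Qed.

Lemma common_nbhd_cliques_ge (t : R) (A : {set T}) k u v :
  0 <= t -> Kr_free_on A k.+2 -> nondegree_le A -> u \in A -> v \in A ->
  cliques (N u :&: N v :&: A) k != set0 ->
  (2 * k%:R + 1) * (D + t) <= 2 * #|A|%:R ->
  t ^+ k <= #|cliques (N u :&: N v :&: A) k|%:R.
Proof.
move=> t0; elim: k A => [|k IH] A free nd uA vA nonempty sizeA.
  by rewrite expr0 ler1n card_gt0.
set C := N u :&: N v :&: A.
have [S0 S0K] := set0Pn _ nonempty.
have D0 : 0 <= D := le_trans (ler0n _ _) (nd u uA).
have E1 : k.+1%:R = k%:R + 1 :> R by rewrite -natr1.
have apex_ge x : x \in clique_apexes C k -> t ^+ k <= #|cliques (C :&: N x) k|%:R.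
  case/setIdP => /setIP[/setIP[]]; rewrite !in_nbhd => eux evx xA nonempty_x.
  have CE : C :&: N x = N u :&: N v :&: (A :&: N x) by rewrite /C setIA.
  rewrite CE; apply: IH.
  - exact: Kr_free_on_setI_nbhd.
  - exact: nondegree_le_setI_nbhd.
  - by rewrite inE uA in_nbhd esym.
  - by rewrite inE vA in_nbhd esym.
  - by rewrite -CE.
  - have := card_setI_nbhd_ge nd xA; move: sizeA; rewrite E1; lra.
have sum_apexes : #|clique_apexes C k|%:R * t ^+ k <= k.+1%:R * #|cliques C k.+1|%:R.
  rewrite mulr_natl -sumr_const; apply: le_trans (ler_sum _ apex_ge) _.
  rewrite -natr_sum -natrM ler_nat; apply: leq_trans (sum_cliques_setI_nbhd _ _).
  by apply/leq_sum_subset/subsetP => x /setIdP[].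
have apexes_ge := card_clique_apexes_ge free nd uA vA S0K.
rewrite -(ler_pM2l (ltr0Sn R k)) exprS mulrA.
apply: le_trans sum_apexes; rewrite ler_wpM2r ?exprn_ge0 //.
apply: le_trans apexes_ge; move: sizeA; rewrite E1.
have := mulr_ge0 (ler0n R k) D0; have := mulr_ge0 (ler0n R k) t0; lra.
Qed.

End CliqueCount.

Lemma maximal_cliques_common_nbhd r u v :
  maximal_Kr_free e r.+2 -> u != v -> ~~ e u v -> cliques (N u :&: N v) r != set0.
Proof.
case=> free maxG nuv neuv.
have : ~~ [forall S : {set T}, (#|S| == r.+2) ==> ~~ cliqueb (add_edge e u v) S].
  apply/negP => /forallP noK; apply: (maxG u v nuv neuv) => S cardS /cliquebP.
  by have := noK S; rewrite cardS eqxx => /negP.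
case/forallPn => S; rewrite negb_imply negbK => /andP[/eqP cardS /cliquebP cS].
have [cSu cSv] := clique_add_edge_setD1 cS.
have in_S w : clique e (S :\ w) -> w \in S.
  move=> cSw; apply/negPn/negP => wS; apply: (free (S :\ w)) cSw.
  by move: cardS; rewrite (cardsD1 w S) (negbTE wS).
apply/set0Pn; exists (S :\ u :\ v); apply/cliquesP; split.
- apply/subsetP => x /setD1P[xv /setD1P[xu xS]]; rewrite !inE.
  have := cS u x (in_S u cSu) xS; have := cS v x (in_S v cSv) xS.
  by rewrite /add_edge (negbTE xu) (negbTE xv) !andbF !orbF ![_ == x]eq_sym xu xv => -> // ->.
- move: cardS; rewrite (cardsD1 u S) (cardsD1 v (S :\ u)) in_S // !inE eq_sym nuv in_S //.
  by move=> [].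
- exact: clique_subset (subD1set _ _) cSu.
Qed.

End Cliques.

Local Open Scope ring_scope.

Theorem proposition4p3 (R : realFieldType) (T : finType) (e : rel T)
    (r : nat) (eps : R) :
  (3 <= r)%N -> 0 < eps ->
  simple_graph e ->
  maximal_Kr_free e r ->
  (forall v : T,
     ((2 * r - 5)%N%:R / (2 * r - 3)%N%:R + eps) * #|T|%:R <= #|nbhd e v|%:R) ->
  ultra_maximal_Kr_free e r (eps ^+ (r - 2)%N).
Proof.
move=> r3 eps0 [esym eirr] maxG deg; split=> [|u v nuv neuv]; first exact: maxG.1.
case: r r3 maxG deg => [|[|[|k]]] // _ maxG deg.
have E5 : (2 * k.+3 - 5)%N%:R = 2 * k%:R + 1 :> R.
  have -> : (2 * k.+3 - 5 = (2 * k).+1)%N by lia.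
  by rewrite -natr1 natrM.
have E3 : (2 * k.+3 - 3)%N%:R = 2 * k%:R + 3 :> R.
  have -> : (2 * k.+3 - 3 = 2 * k + 3)%N by lia.
  by rewrite natrD natrM.
rewrite E5 E3 in deg; change (k.+3 - 2)%N with k.+1.
set n := #|T|%:R in deg *; set c := (2 * k%:R + 1) / (2 * k%:R + 3) + eps in deg.
rewrite num_cliquesE -exprMn -[nbhd e u :&: _]setIT.
apply: (common_nbhd_cliques_ge esym eirr (D := n - c * n)).
- exact: mulr_ge0 (ltW eps0) (ler0n _ _).
- by move=> S _; apply: maxG.1.
- by move=> y _; have := deg y; rewrite setTD /n -(cardsC (nbhd e y)) natrD; lra.
- exact: in_setT.
- exact: in_setT.
- by rewrite setIT; apply: maximal_cliques_common_nbhd.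
- rewrite cardsT -/n /c -natr1 [X in X <= _](_ : _ = 2 * n) //.
  by field; have := ler0n R k; lra.
Qed.
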